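(* For every positive integer $m$, $$\sum_{t=0}^{\lfloor m/6\rfloor}\binom{2m}{m+6t}=\frac12\left(\frac{2^{2m-1}+1}{3}+3^{m-1}+\binom{2m}{m}\right).$$ *)

From mathcomp Require Import all_boot all_order all_algebra.

(** Let [S d n s] be the sum of the binomial coefficients ['C(n, k)] with
    [k = s] modulo [d].  By the symmetry ['C(2m, m - j) = 'C(2m, m + j)], twice
    the sum of the theorem is [S 6 (2m) m + 'C(2m, m)].  The six residue sums
    obey Pascal's rule, and a roots-of-unity filter gives
    [6 S 6 (2m) (m + r) = 4^m + 2 3^m cos(r pi/3) + 2 cos(2 r pi/3)] for
    [m > 0]; we prove this closed form directly by induction on [m], two rows
    of Pascal's triangle at a time. *)

From mathcomp Require Import all_boot all_order all_algebra.
From mathcomp Require Import ring lra zify.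
Import GRing.Theory Num.Theory.

Definition binom_sum_mod (d n s : nat) : nat :=
  \sum_(0 <= k < n.+1) (k %% d == s %% d) * 'C(n, k).

Lemma binom_sum_mod_modr d n s : binom_sum_mod d n (s %% d) = binom_sum_mod d n s.
Proof. by rewrite /binom_sum_mod modn_mod. Qed.

Lemma binom_sum_modDr d n s : binom_sum_mod d n (s + d) = binom_sum_mod d n s.
Proof. by rewrite -binom_sum_mod_modr modnDr binom_sum_mod_modr. Qed.

Lemma binom_sum_modS d n s :
  binom_sum_mod d n.+1 s.+1 = binom_sum_mod d n s.+1 + binom_sum_mod d n s.
Proof.
have eq_modS i : (i.+1 %% d == s.+1 %% d) = (i %% d == s %% d).
  by rewrite -!(add1n i) -(add1n s) eqn_modDl.
rewrite /binom_sum_mod (big_nat_recl n.+1) //.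
rewrite (big_nat_recl n 0 (fun k => (k %% d == s.+1 %% d) * 'C(n, k))) //.
under eq_bigr do rewrite binS mulnDr eq_modS.
rewrite big_split /= (big_nat_recr n 0 (fun i => (i %% d == s %% d) * 'C(n, i.+1))) //=.
rewrite (bin_small (ltnSn n)) muln0 addn0 !bin0 !addnA; congr (_ + _ + _).
by apply: eq_bigr => i _; rewrite eq_modS.
Qed.

(** [s + d] stands for [s - 1] modulo [d.+1], avoiding truncated subtraction. *)
Lemma binom_sum_modSn d n s :
  binom_sum_mod d.+1 n.+1 s = binom_sum_mod d.+1 n s + binom_sum_mod d.+1 n (s + d).
Proof.
by rewrite -binom_sum_modDr (addnS s d) binom_sum_modS -(addnS s d) binom_sum_modDr.
Qed.

Lemma sum_nat_dvd_mulr (F : nat -> nat) d n : 0 < d ->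
  \sum_(0 <= j < n * d) (j %% d == 0) * F j = \sum_(0 <= t < n) F (t * d).
Proof.
move=> d_gt0; elim: n => [|n IH]; first by rewrite !big_geq.
rewrite big_nat_recr //= -IH mulSn addnC (big_cat_nat (n := n * d)) //=; last by lia.
congr (_ + _); rewrite -{1}(add0n (n * d)) big_addn addKn.
case: d d_gt0 IH => // d _ _; rewrite big_nat_recl //= big1_seq => [|j].
  by rewrite add0n addn0 modnMl mul1n.
rewrite mem_index_iota => /andP[_ lt_jd].
by rewrite addnC modnMDl modn_small.
Qed.

Lemma sum_nat_dvd (F : nat -> nat) d m : 0 < d ->
  \sum_(0 <= j < m.+1) (j %% d == 0) * F j = \sum_(0 <= t < (m %/ d).+1) F (t * d).
Proof.
move=> d_gt0; rewrite -sum_nat_dvd_mulr // [RHS](big_cat_nat (n := m.+1)) //=; last first.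
  exact: ltn_ceil.
rewrite [X in _ = _ + X]big1_seq ?addn0 // => j.
rewrite mem_index_iota => /andP[_ /andP[lt_mj lt_jd]].
have [/eqP j_mod | j_mod] := boolP (j %% d == 0); last by rewrite mul0n.
have def_j : j = j %/ d * d by rewrite {1}(divn_eq j d) j_mod addn0.
rewrite def_j ltn_pmul2r // ltnS leq_divRL // in lt_jd.
by rewrite def_j ltnNge lt_jd in lt_mj.
Qed.

Lemma binom_sum_mod_central d m :
  binom_sum_mod d m.*2 m + 'C(m.*2, m)
    = 2 * \sum_(0 <= j < m.+1) (j %% d == 0) * 'C(m.*2, j + m).
Proof.
set upper := \sum_(0 <= j < m.+1) (j %% d == 0) * 'C(m.*2, j + m).
set upper' := \sum_(0 <= i < m) (i.+1 %% d == 0) * 'C(m.*2, i.+1 + m).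
have def_upper : upper = 'C(m.*2, m) + upper'.
  by rewrite /upper big_nat_recl // mod0n mul1n add0n.
suff -> : binom_sum_mod d m.*2 m = upper' + upper by rewrite def_upper; lia.
rewrite /binom_sum_mod (big_cat_nat (n := m)) //=; last by lia.
congr (_ + _).
  rewrite big_nat_rev /= add0n big_nat_cond [RHS]big_nat_cond.
  apply: eq_bigr => i /andP [/andP [_ lt_im] _].
  have def_m : m = m - i.+1 + i.+1 by lia.
  rewrite -bin_sub; last by lia.
  have -> : m.*2 - (m - i.+1) = i.+1 + m by lia.
  by rewrite {2}def_m -{1}(addn0 (m - i.+1)) eqn_modDl mod0n eq_sym.
rewrite -{1}(add0n m) big_addn (_ : (m.*2).+1 - m = m.+1); last by lia.
by apply: eq_bigr => i _; rewrite -{2}(add0n m) eqn_modDr mod0n.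
Qed.

Lemma sum_binom_central_dvd d m : 0 < d ->
  2 * \sum_(0 <= t < (m %/ d).+1) 'C(m.*2, m + d * t)
    = binom_sum_mod d m.*2 m + 'C(m.*2, m).
Proof.
move=> d_gt0; rewrite binom_sum_mod_central sum_nat_dvd //.
by congr (2 * _); apply: eq_bigr => t _; rewrite addnC mulnC.
Qed.

Local Open Scope ring_scope.

(** [twice_cos_third r = 2 cos (r pi / 3)] and
    [twice_cos_two_thirds r = 2 cos (2 r pi / 3)]. *)
Definition twice_cos_third (r : nat) : int := nth 0 [:: 2; 1; -1; -2; -1; 1] (r %% 6)%N.
Definition twice_cos_two_thirds (r : nat) : int := nth 0 [:: 2; -1; -1; 2; -1; -1] (r %% 6)%N.

Lemma twice_cos_thirdD5 r :
  twice_cos_third (r + 5) = twice_cos_third r - twice_cos_third r.+1.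
Proof.
rewrite /twice_cos_third -[r.+1]addn1 -(modnDml r 5) -(modnDml r 1).
by case: (r %% 6)%N (ltn_pmod r (isT : (0 < 6)%N)) => [|[|[|[|[|[|]]]]]].
Qed.

Lemma twice_cos_two_thirdsD5 r :
  twice_cos_two_thirds (r + 5) = - twice_cos_two_thirds r - twice_cos_two_thirds r.+1.
Proof.
rewrite /twice_cos_two_thirds -[r.+1]addn1 -(modnDml r 5) -(modnDml r 1).
by case: (r %% 6)%N (ltn_pmod r (isT : (0 < 6)%N)) => [|[|[|[|[|[|]]]]]].
Qed.

Lemma binom_sum_mod6_double m r : (0 < m)%N ->
  6 * (binom_sum_mod 6 m.*2 (m + r))%:Z
    = 4 ^+ m + 3 ^+ m * twice_cos_third r + twice_cos_two_thirds r.
Proof.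
elim: m r => // -[_ r _ | m IH r _].
  rewrite -binom_sum_mod_modr -modnDmr /twice_cos_third /twice_cos_two_thirds.
  case: (r %% 6)%N (ltn_pmod r (isT : (0 < 6)%N)) => [|[|[|[|[|[|]]]]]] // _;
  by rewrite /binom_sum_mod unlock.
have S5 k x : binom_sum_mod 6 k (x.+1 + 5) = binom_sum_mod 6 k x.
  by rewrite addSnnS binom_sum_modDr.
rewrite doubleS addSn binom_sum_modS.
rewrite (binom_sum_modSn _ _ (m.+1 + r).+1) (binom_sum_modSn _ _ (m.+1 + r)) S5.
have IH1 := IH r.+1 isT; have IH0 := IH r isT; have IH5 := IH (r + 5) isT.
rewrite addnS in IH1; rewrite addnA in IH5.
rewrite !PoszD !mulrDr IH1 IH0 IH5 twice_cos_thirdD5 twice_cos_two_thirdsD5 !exprS.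
ring.
Qed.

Lemma binom_sum_mod6_central m : (0 < m)%N ->
  (6 * binom_sum_mod 6 m.*2 m = 4 ^ m + 2 * 3 ^ m + 2)%N.
Proof.
move=> m_gt0; apply/eqP; rewrite -eqz_nat !PoszM !PoszD.
have := binom_sum_mod6_double m 0 m_gt0; rewrite addn0 /= => ->.
by rewrite -!natz !natrX /twice_cos_third /twice_cos_two_thirds /=; apply/eqP; ring.
Qed.

Theorem lemma4 (m : nat) (hm : (0 < m)%N) :
  (\sum_(0 <= t < (m %/ 6).+1) ('C(m.*2, m + 6 * t))%:R : rat)
  = 2%:R^-1 * (((2 ^ (m.*2 - 1))%:R + 1) / 3%:R
                + (3 ^ (m - 1))%:R + ('C(m.*2, m))%:R).
Proof.
case: m hm => // k _.
have central := @sum_binom_central_dvd 6 k.+1 isT.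
have closed := @binom_sum_mod6_central k.+1 isT.
have pow4 : (4 ^ k.+1 = 2 * 2 ^ k.*2.+1)%N by rewrite -expnS -doubleS -mul2n expnM.
rewrite pow4 (expnS 3) in closed.
rewrite -natr_sum (_ : (k.+1.*2 - 1 = k.*2.+1)%N); last by lia.
rewrite subn1 succnK.
set S := (\sum_(_ <= _ < _) _)%N in central *.
set a := (2 ^ k.*2.+1)%N in closed *; set b := (3 ^ k)%N in closed *.
set c := 'C(k.+1.*2, k.+1) in central *.
have key : (6 * S = a + 1 + 3 * b + 3 * c)%N by lia.
clearbody S a b c; move/(congr1 (fun n => n%:R : rat)): key.
rewrite !natrM !natrD; lra.
Qed.
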